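(* Let $f:(0,1]\to(0,\infty)$ be the compliance--volume fraction Pareto front (as described in the context) and let $f^{-1}:[f(1),+\infty[\,\to(0,1]$ be its reciprocal (inverse) function, so that $f^{-1}(f(1))=1$. Then for every real $a>1$ and every $x\in[f(1),+\infty[$, $$a\,f^{-1}(a x)\le f^{-1}(x).$$
   Context: Setting: a 2D structural topology optimization problem (compliance minimization under a volume fraction constraint) on a fixed design domain. For a volume fraction $V_f\in(0,1]$ (the ratio of the volume of the design to the volume of the design domain), $f(V_f)$ denotes the globally optimal compliance attainable by a design of volume fraction $V_f$, computed for a unit load, unit out-of-plane thickness and unit Young's modulus; the graph of $f$ is the compliance--volume fraction Pareto front. Standing assumptions used for $f$: $f$ is differentiable on $(0,1]$ with $f'(V_f)<0$ (so $f$ is strictly decreasing), and $f(V_f)\to+\infty$ as $V_f\searrow 0$, so that $f$ is a bijection from $(0,1]$ onto $[f(1),+\infty[$ with inverse $f^{-1}$. The efficiency ratio (ER) is $n(V_f)=-V_f\,f'(V_f)/f(V_f)$, and it is assumed that $n(V_f)\le 1$ for all $V_f\in(0,1]$. *)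

From Stdlib Require Import Reals.
From Coquelicot Require Import Coquelicot.
Open Scope R_scope.

Definition in_dom (V : R) : Prop := 0 < V <= 1.

(* [f] has derivative [l] at [V] relative to the domain (0,1]:
   (f W - f V)/(W - V) -> l as W -> V with W in (0,1], W <> V.
   At interior points this is the usual derivative; at V = 1 it is the
   left derivative. *)
Definition has_derive_dom (f : R -> R) (V l : R) : Prop :=
  filterlim (fun W => (f W - f V) / (W - V))
    (within (fun W => in_dom W /\ W <> V) (locally V)) (locally l).

Definition ER (f df : R -> R) (V : R) : R := - V * df V / f V.

From Stdlib Require Import Reals Lra.
From Coquelicot Require Import Coquelicot.
Open Scope R_scope.

(* The condition [n <= 1] says exactly that the derivative [f + V f'] of
   [V f(V)] is nonnegative, so [V f(V)] is nondecreasing on (0,1] (at the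
   endpoint 1 by left continuity).  Since [f] is decreasing,
   [W := f^-1(a x) <= V := f^-1(x)], hence [W a x = W f(W) <= V f(V) = V x]. *)

Lemma ball_R (x e y : R) : ball x e y <-> x - e < y < x + e.
Proof.
  change (ball x e y) with (Rabs (y - x) < e).
  split; intros H; [apply Rabs_def2 in H | apply Rabs_def1]; lra.
Qed.

Lemma has_derive_dom_derivable_pt_lim (f : R -> R) (V l : R) :
  0 < V < 1 -> has_derive_dom f V l -> derivable_pt_lim f V l.
Proof.
  intros HV Hd eps Heps.
  destruct (Hd _ (locally_ball l (mkposreal eps Heps))) as [[d Hd0] Hball].
  assert (Hdelta : 0 < Rmin d (Rmin V (1 - V))) by (repeat apply Rmin_pos; lra).
  exists (mkposreal _ Hdelta); simpl; intros h Hh0 Hh.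
  pose proof (Rmin_l d (Rmin V (1 - V))); pose proof (Rmin_r d (Rmin V (1 - V))).
  pose proof (Rmin_l V (1 - V)); pose proof (Rmin_r V (1 - V)).
  apply Rabs_def2 in Hh.
  assert (Hq := Hball (V + h)).
  replace (V + h - V) with h in Hq by ring.
  apply Hq; [apply ball_R; simpl; lra | split; [split|]; lra].
Qed.

Lemma has_derive_dom_continuous (f : R -> R) (V l : R) :
  has_derive_dom f V l ->
  filterlim f (within (fun W => in_dom W /\ W <> V) (locally V)) (locally (f V)).
Proof.
  intros Hd.
  apply (filterlim_within_ext _ (fun W => f V + (f W - f V) / (W - V) * (W - V))).
  { intros W [_ HW]. field. lra. }
  replace (locally (f V)) with (locally (f V + l * (V - V))) by (f_equal; ring).
  eapply filterlim_comp_2; [apply filterlim_const| |exact (filterlim_plus (K := R_AbsRing) _ _)].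
  eapply filterlim_comp_2; [exact Hd| |exact (filterlim_mult (K := R_AbsRing) _ _)].
  apply (filterlim_filter_le_1 _ (filter_le_within _)).
  exact (continuous_minus (fun W : R => W) (fun _ => V) V (continuous_id V) (continuous_const V V)).
Qed.

Lemma at_left_1_le_within_dom :
  filter_le (at_left 1) (within (fun W => in_dom W /\ W <> 1) (locally 1)).
Proof.
  intros P [[d Hd0] HP].
  assert (Hd1 : 0 < Rmin d 1) by (apply Rmin_pos; lra).
  exists (mkposreal _ Hd1); simpl; intros W HW HW1.
  apply ball_R in HW; simpl in HW.
  pose proof (Rmin_l d 1); pose proof (Rmin_r d 1).
  apply HP; [apply ball_R; simpl; lra | split; [split|]; lra].
Qed.

Lemma le_of_nondecreasing_at_left (g : R -> R) (a b : R) :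
  a < b -> (forall U, a < U < b -> g a <= g U) ->
  filterlim g (at_left b) (locally (g b)) -> g a <= g b.
Proof.
  intros Hab Hmono Hg.
  apply (filterlim_le (F := at_left b) (fun _ => g a) g (g a) (g b));
    [|apply filterlim_const|exact Hg].
  assert (Hba : 0 < b - a) by lra.
  exists (mkposreal _ Hba); simpl; intros U HU HUb.
  apply ball_R in HU; simpl in HU.
  apply Hmono; lra.
Qed.

Lemma nondecreasing_of_derive_nonneg (g dg : R -> R) (a b : R) :
  (forall V, a < V < b -> derivable_pt_lim g V (dg V)) ->
  (forall V, a < V < b -> 0 <= dg V) ->
  forall V W, a < V -> V <= W -> W < b -> g V <= g W.
Proof.
  intros Hd Hdg V W HV HVW HW.
  destruct (Req_dec V W) as [<-|Hne]; [lra|].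
  destruct (MVT_cor2 g dg V W) as [c [Hc Hcint]]; [lra|intros c Hc; apply Hd; lra|].
  assert (0 <= dg c * (W - V)) by (apply Rmult_le_pos; [apply Hdg|]; lra).
  lra.
Qed.

Lemma nondecreasing_on_dom (g dg : R -> R) :
  (forall V, 0 < V < 1 -> derivable_pt_lim g V (dg V)) ->
  (forall V, 0 < V < 1 -> 0 <= dg V) ->
  filterlim g (at_left 1) (locally (g 1)) ->
  forall V W, in_dom V -> in_dom W -> V <= W -> g V <= g W.
Proof.
  intros Hd Hdg Hg1 V W [HV0 HV1] [HW0 HW1] HVW.
  assert (Hopen := nondecreasing_of_derive_nonneg g dg 0 1 Hd Hdg).
  destruct (Req_dec W 1) as [->|HW]; [|apply Hopen; lra].
  destruct (Req_dec V 1) as [->|HV]; [lra|].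
  apply le_of_nondecreasing_at_left; [lra| |exact Hg1].
  intros U HU; apply Hopen; lra.
Qed.

Section ParetoFront.

Variables f df : R -> R.
Hypothesis f_pos : forall V, in_dom V -> 0 < f V.
Hypothesis f_derive : forall V, in_dom V -> has_derive_dom f V (df V).

Let f_derivable_pt_lim V : 0 < V < 1 -> derivable_pt_lim f V (df V).
Proof.
  intros HV; apply has_derive_dom_derivable_pt_lim; [exact HV|].
  apply f_derive; split; lra.
Qed.

Lemma f_continuous_at_left_1 : filterlim f (at_left 1) (locally (f 1)).
Proof.
  apply (filterlim_filter_le_1 _ at_left_1_le_within_dom).
  apply has_derive_dom_continuous with (df 1), f_derive; split; lra.
Qed.

Lemma f_nonincreasing :
  (forall V, in_dom V -> df V < 0) ->
  forall V W, in_dom V -> in_dom W -> V <= W -> f W <= f V.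
Proof.
  intros df_neg V W HV HW HVW.
  apply Ropp_le_cancel.
  apply (nondecreasing_on_dom (fun V => - f V) (fun V => - df V)); try assumption.
  - intros U HU; apply derivable_pt_lim_opp, f_derivable_pt_lim, HU.
  - intros U HU; assert (df U < 0) by (apply df_neg; split; lra); lra.
  - eapply filterlim_comp; [exact f_continuous_at_left_1|exact (filterlim_opp (f 1))].
Qed.

Lemma mul_f_nondecreasing :
  (forall V, in_dom V -> ER f df V <= 1) ->
  forall V W, in_dom V -> in_dom W -> V <= W -> V * f V <= W * f W.
Proof.
  intros ER_le_1.
  apply (nondecreasing_on_dom (fun V => V * f V) (fun V => 1 * f V + V * df V)).
  - intros U HU; apply (derivable_pt_lim_mult id f); [apply derivable_pt_lim_id|auto].
  - intros U HU.
    assert (HUdom : in_dom U) by (split; lra).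
    assert (HfU := f_pos U HUdom); assert (HER := ER_le_1 U HUdom).
    unfold ER in HER; apply Rdiv_le_1 in HER; [lra|exact HfU].
  - eapply filterlim_comp_2;
      [apply (filterlim_filter_le_1 _ (filter_le_within _)), filterlim_id
      |exact f_continuous_at_left_1
      |exact (filterlim_mult (K := R_AbsRing) 1 (f 1))].
Qed.

End ParetoFront.

Theorem lemma2 (f df finv : R -> R)
  (Hpos : forall V, in_dom V -> 0 < f V)
  (Hder : forall V, in_dom V -> has_derive_dom f V (df V))
  (Hneg : forall V, in_dom V -> df V < 0)
  (Hlim : filterlim f (at_right 0) (Rbar_locally p_infty))
  (Hinv1 : forall x, f 1 <= x -> in_dom (finv x) /\ f (finv x) = x)
  (Hinv2 : forall V, in_dom V -> finv (f V) = V)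
  (HER : forall V, in_dom V -> ER f df V <= 1) :
  forall a x, 1 < a -> f 1 <= x -> a * finv (a * x) <= finv x.
Proof.
  intros a x Ha Hx.
  assert (Hx0 : 0 < x) by (pose proof (Hpos 1 (conj Rlt_0_1 (Rle_refl 1))); lra).
  destruct (Hinv1 x Hx) as [HV HfV].
  destruct (Hinv1 (a * x)) as [HW HfW]; [nra|].
  set (V := finv x) in *; set (W := finv (a * x)) in *.
  assert (HWV : W <= V).
  { destruct (Rle_or_lt W V) as [|HVW]; [assumption|].
    pose proof (f_nonincreasing f df Hder Hneg V W HV HW (Rlt_le _ _ HVW)).
    nra. }
  pose proof (mul_f_nondecreasing f df Hpos Hder HER W V HW HV HWV) as HWfV.
  rewrite HfW, HfV in HWfV.
  nra.
Qed.
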